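(* Let $\alpha,\beta,\gamma$ be nonnegative real numbers with $\gamma\neq 0$, and put $r=\beta/\gamma$, $s=\alpha/\gamma$, $t=1/\gamma$. Let $(V_n)_{n\in\mathbb{Z}}$ be the generalized Tribonacci sequence with parameters $r,s,t$ (defined in the context). Let $x_{-1},x_0$ be nonzero real numbers with $(x_{-1},x_0)\notin F$, where $$F=\bigcup_{n=-1}^{\infty}\left\{(x_{-1},x_0):\ tV_n x_{-1}x_0+(V_{n+2}-rV_{n+1})x_0+V_{n+1}=0\right\},$$ and let $(x_n)_{n\ge -1}$ be the solution of $$x_{n+1}=\frac{\gamma}{x_n(x_{n-1}+\alpha)+\beta},\qquad n=0,1,2,\dots$$ with these initial values. Then for all $n=0,1,2,\dots$, $$x_n=\frac{tV_{n-1}x_{-1}x_0+(V_{n+1}-rV_n)x_0+V_n}{tV_nx_{-1}x_0+(V_{n+2}-rV_{n+1})x_0+V_{n+1}}.$$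
   Context: The generalized Tribonacci sequence with real parameters $r,s,t$ ($t\neq 0$) is defined by $V_0=0$, $V_1=1$, $V_2=r$ and $V_{n+3}=rV_{n+2}+sV_{n+1}+tV_n$ for $n\ge 0$, and is extended to negative indices by $V_{-n}=-\frac{s}{t}V_{-(n-1)}-\frac{r}{t}V_{-(n-2)}+\frac{1}{t}V_{-(n-3)}$ for $n=1,2,3,\dots$, so that the recurrence holds for all integers $n$ (in particular $V_{-1}=0$). *)

From Stdlib Require Import Reals ZArith Lra.
Open Scope R_scope.

(* Forward triple: tri r s t n = (V_n, V_{n+1}, V_{n+2}) for n >= 0. *)
Fixpoint tri (r s t : R) (n : nat) : R * R * R :=
  match n with
  | O => (0, 1, r)
  | S m => let '(a, b, c) := tri r s t m in (b, c, r * c + s * b + t * a)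
  end.

(* Backward triple: tri_back r s t n = (V_{-n}, V_{-n+1}, V_{-n+2}) for n >= 0,
   using V_{-n} = -(s/t) V_{-(n-1)} - (r/t) V_{-(n-2)} + (1/t) V_{-(n-3)}. *)
Fixpoint tri_back (r s t : R) (n : nat) : R * R * R :=
  match n with
  | O => (0, 1, r)
  | S m => let '(a, b, c) := tri_back r s t m in
           (- (s / t) * a - (r / t) * b + (1 / t) * c, a, b)
  end.

Definition V (r s t : R) (z : Z) : R :=
  match z with
  | Z0 => 0
  | Zpos p => fst (fst (tri r s t (Pos.to_nat p)))
  | Zneg p => fst (fst (tri_back r s t (Pos.to_nat p)))
  end.

(* Writing x_n = D_{n-1} / D_n, the rational recurrence for x becomes the
   linear recurrence gamma D_{n+1} = beta D_n + alpha D_{n-1} + D_{n-2}, i.e.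
   the Tribonacci recurrence with parameters (beta/gamma, alpha/gamma, 1/gamma).
   The denominator D_n of the closed form is a linear combination of shifts of
   V, hence a solution of that recurrence, and its values D_{-2} = x_{-1} x_0,
   D_{-1} = x_0, D_0 = 1 match the initial data; the hypothesis on F says that
   no D_n with n >= -1 vanishes. *)
From Stdlib Require Import Reals ZArith Lra Lia.
Open Scope R_scope.

Definition tribonacci_rec (r s t : R) (u : Z -> R) : Prop :=
  forall n : Z, u (n + 3)%Z = r * u (n + 2)%Z + s * u (n + 1)%Z + t * u n.

Lemma tribonacci_rec_shift r s t (u : Z -> R) (k : Z) :
  tribonacci_rec r s t u -> tribonacci_rec r s t (fun n => u (n + k)%Z).
Proof.
  intros Hu n.
  replace (n + 3 + k)%Z with (n + k + 3)%Z by lia.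
  replace (n + 2 + k)%Z with (n + k + 2)%Z by lia.
  replace (n + 1 + k)%Z with (n + k + 1)%Z by lia.
  apply Hu.
Qed.

Lemma tribonacci_rec_lincomb r s t (u v : Z -> R) (a b : R) :
  tribonacci_rec r s t u -> tribonacci_rec r s t v ->
  tribonacci_rec r s t (fun n => a * u n + b * v n).
Proof. intros Hu Hv n. rewrite Hu, Hv. ring. Qed.

Lemma V_of_nat r s t (k : nat) : V r s t (Z.of_nat k) = fst (fst (tri r s t k)).
Proof. destruct k as [|k]; [reflexivity|]. simpl. now rewrite SuccNat2Pos.id_succ. Qed.

Lemma V_opp_of_nat r s t (k : nat) :
  V r s t (- Z.of_nat k) = fst (fst (tri_back r s t k)).
Proof. destruct k as [|k]; [reflexivity|]. simpl. now rewrite SuccNat2Pos.id_succ. Qed.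

Lemma tri_V r s t (k : nat) :
  tri r s t k = (V r s t (Z.of_nat k), V r s t (Z.of_nat k + 1), V r s t (Z.of_nat k + 2)).
Proof.
  induction k as [|k IHk]; [reflexivity|].
  cbn [tri]. rewrite IHk, Nat2Z.inj_succ.
  replace (Z.succ (Z.of_nat k) + 1)%Z with (Z.of_nat k + 2)%Z by lia.
  replace (Z.succ (Z.of_nat k) + 2)%Z with (Z.of_nat (S (S (S k)))) by lia.
  replace (Z.succ (Z.of_nat k)) with (Z.of_nat k + 1)%Z by lia.
  rewrite (V_of_nat r s t (S (S (S k)))). cbn [tri]. now rewrite IHk.
Qed.

Lemma tri_back_V r s t (k : nat) :
  tri_back r s t k =
  (V r s t (- Z.of_nat k), V r s t (- Z.of_nat k + 1), V r s t (- Z.of_nat k + 2)).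
Proof.
  induction k as [|k IHk]; [reflexivity|].
  assert (Hfst := V_opp_of_nat r s t (S k)).
  cbn [tri_back] in Hfst |- *. rewrite IHk in Hfst |- *. cbn [fst] in Hfst.
  rewrite <- Hfst.
  replace (- Z.of_nat (S k) + 1)%Z with (- Z.of_nat k)%Z by lia.
  replace (- Z.of_nat (S k) + 2)%Z with (- Z.of_nat k + 1)%Z by lia.
  reflexivity.
Qed.

(* For negative indices the recurrence is the defining backward step solved
   for V_{n+3}, which needs t <> 0. *)
Lemma V_tribonacci_rec r s t : t <> 0 -> tribonacci_rec r s t (V r s t).
Proof.
  intros Ht n. destruct (Z_le_gt_dec 0 n) as [Hn|Hn].
  - destruct (Z_of_nat_complete n Hn) as [k ->].
    assert (Hstep := f_equal snd (tri_V r s t (S k))).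
    cbn [tri] in Hstep. rewrite tri_V in Hstep. cbn [snd] in Hstep.
    replace (Z.of_nat k + 3)%Z with (Z.of_nat (S k) + 2)%Z by lia.
    rewrite <- Hstep. ring.
  - destruct (Z_of_nat_complete (- n - 1)) as [k Hk]; [lia|].
    assert (Hstep := f_equal (fun p => fst (fst p)) (tri_back_V r s t (S k))).
    cbn [tri_back] in Hstep. rewrite tri_back_V in Hstep. cbn [fst] in Hstep.
    replace (- Z.of_nat (S k))%Z with n in Hstep by lia.
    replace (- Z.of_nat k)%Z with (n + 1)%Z in Hstep by lia.
    replace (n + 1 + 1)%Z with (n + 2)%Z in Hstep by lia.
    replace (n + 1 + 2)%Z with (n + 3)%Z in Hstep by lia.
    rewrite <- Hstep. field. exact Ht.
Qed.

Definition forbidden_form (r s t a b : R) (n : Z) : R :=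
  t * V r s t n * a * b
  + (V r s t (n + 2) - r * V r s t (n + 1)) * b + V r s t (n + 1).

Lemma forbidden_form_tribonacci_rec r s t a b :
  t <> 0 -> tribonacci_rec r s t (forbidden_form r s t a b).
Proof.
  intros Ht.
  assert (HV := V_tribonacci_rec r s t Ht).
  assert (Hlin : tribonacci_rec r s t
    (fun n => t * a * b * V r s t n
              + 1 * (b * V r s t (n + 2)%Z + (1 - r * b) * V r s t (n + 1)%Z))).
  { apply tribonacci_rec_lincomb; [exact HV|].
    apply tribonacci_rec_lincomb; apply tribonacci_rec_shift; exact HV. }
  intros n. unfold forbidden_form. specialize (Hlin n). cbv beta in Hlin.
  lra.
Qed.

Lemma forbidden_form_init r s t a b : t <> 0 ->
  forbidden_form r s t a b (-2) = a * b /\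
  forbidden_form r s t a b (-1) = b /\
  forbidden_form r s t a b 0 = 1.
Proof.
  intros Ht. unfold forbidden_form, V. simpl.
  repeat split; field; exact Ht.
Qed.

Lemma ratio_step (alpha beta gamma : R) (u : Z -> R) (n : Z) :
  gamma <> 0 -> tribonacci_rec (beta / gamma) (alpha / gamma) (1 / gamma) u ->
  u (n - 1)%Z <> 0 -> u n <> 0 -> u (n + 1)%Z <> 0 ->
  gamma / (u (n - 1)%Z / u n * (u (n - 2)%Z / u (n - 1)%Z + alpha) + beta)
  = u n / u (n + 1)%Z.
Proof.
  intros Hg Hu H1 H2 H3.
  assert (Hrec := Hu (n - 2)%Z).
  replace (n - 2 + 3)%Z with (n + 1)%Z in Hrec by lia.
  replace (n - 2 + 2)%Z with n in Hrec by lia.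
  replace (n - 2 + 1)%Z with (n - 1)%Z in Hrec by lia.
  assert (Hden : u (n - 1)%Z / u n * (u (n - 2)%Z / u (n - 1)%Z + alpha) + beta
                 = gamma * u (n + 1)%Z / u n).
  { rewrite Hrec. field. auto. }
  rewrite Hden. field. auto.
Qed.

Lemma ratio_solution (alpha beta gamma : R) (u x : Z -> R) :
  gamma <> 0 -> tribonacci_rec (beta / gamma) (alpha / gamma) (1 / gamma) u ->
  (forall n, (-1 <= n)%Z -> u n <> 0) ->
  x (-1)%Z = u (-2)%Z / u (-1)%Z -> x 0%Z = u (-1)%Z / u 0%Z ->
  (forall n, (0 <= n)%Z -> x (n + 1)%Z = gamma / (x n * (x (n - 1)%Z + alpha) + beta)) ->
  forall n, (0 <= n)%Z -> x n = u (n - 1)%Z / u n.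
Proof.
  intros Hg Hu Hnz Hxm1 Hx0 Hx.
  assert (Hpair : forall n, (0 <= n)%Z ->
            x (n - 1)%Z = u (n - 2)%Z / u (n - 1)%Z /\ x n = u (n - 1)%Z / u n).
  { apply natlike_ind; [now split|].
    intros n Hn [IH1 IH2].
    replace (Z.succ n - 1)%Z with n by lia.
    replace (Z.succ n - 2)%Z with (n - 1)%Z by lia.
    split; [exact IH2|].
    replace (Z.succ n) with (n + 1)%Z by lia.
    rewrite Hx, IH1, IH2 by exact Hn.
    apply ratio_step; auto; apply Hnz; lia. }
  intros n Hn. apply (Hpair n Hn).
Qed.

Theorem mainTheorem1 (alpha beta gamma : R) (x : Z -> R) :
  0 <= alpha -> 0 <= beta -> 0 <= gamma -> gamma <> 0 ->
  let r := beta / gamma in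
  let s := alpha / gamma in
  let t := 1 / gamma in
  x (-1)%Z <> 0 -> x 0%Z <> 0 ->
  (* (x_{-1}, x_0) not in F *)
  (forall n : Z, (-1 <= n)%Z ->
     t * V r s t n * x (-1)%Z * x 0%Z
     + (V r s t (n + 2) - r * V r s t (n + 1)) * x 0%Z
     + V r s t (n + 1) <> 0) ->
  (* x is the solution of the difference equation *)
  (forall n : Z, (0 <= n)%Z ->
     x (n + 1)%Z = gamma / (x n * (x (n - 1)%Z + alpha) + beta)) ->
  forall n : Z, (0 <= n)%Z ->
    x n =
      (t * V r s t (n - 1) * x (-1)%Z * x 0%Z
       + (V r s t (n + 1) - r * V r s t n) * x 0%Z + V r s t n)
      / (t * V r s t n * x (-1)%Z * x 0%Z
         + (V r s t (n + 2) - r * V r s t (n + 1)) * x 0%Z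
         + V r s t (n + 1)).
Proof.
  intros _ _ _ Hg r s t Hxm1 Hx0 HF Hx n Hn.
  assert (Ht : t <> 0) by (unfold t, Rdiv; rewrite Rmult_1_l; exact (Rinv_neq_0_compat _ Hg)).
  set (D := forbidden_form r s t (x (-1)%Z) (x 0%Z)).
  destruct (forbidden_form_init r s t (x (-1)%Z) (x 0%Z) Ht) as (Dm2 & Dm1 & D0).
  assert (Hsol : x n = D (n - 1)%Z / D n).
  { apply (ratio_solution alpha beta gamma D x Hg); auto.
    - exact (forbidden_form_tribonacci_rec r s t _ _ Ht).
    - unfold D. rewrite Dm2, Dm1. field. auto.
    - unfold D. rewrite Dm1, D0. field. }
  rewrite Hsol. unfold D, forbidden_form.
  replace (n - 1 + 2)%Z with (n + 1)%Z by lia.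
  replace (n - 1 + 1)%Z with n by lia.
  reflexivity.
Qed.
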